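(* Let $k\ge2$, $n\ge1$, $A=\{0<1<\cdots<k-1\}$, and let $v\in\Gamma_{k,n}$. Then the standard permutation $\pi(v)$ of $[k^{n}]$ is $\pi=\bigcup_{i=0}^{k-1}\pi_{i}$, a union of $k$ order-preserving injective partial maps with $\mathrm{dom}\,\pi_{i}=\{x\in[k^{n}]:\text{the first digit of the }n\text{-digit base-}k\text{ representation of }x\text{ is }i\}$ for $0\le i\le k-1$. The sets $\mathrm{ran}\,\pi_{i}$ partition $[k^{n}]$, and each $\mathrm{ran}\,\pi_{i}$ is a transversal of the partition of $[k^{n}]$ into the intervals $[jk,(j+1)k-1]$, $0\le j\le k^{n-1}-1$ (i.e. meets each such interval in exactly one point).
   Context: $[N]=\{0<1<\cdots<N-1\}$. $G\subseteq A^{k}$ is the set of words of length $k$ in which each letter of $A$ occurs exactly once, and $\Gamma_{k,n}=G^{k^{n-1}}$, the set of concatenations of $k^{n-1}$ words from $G$. Standard permutation of $w\in A^{N}$: let $f(w)$ be the letters of $w$ in nondecreasing order; for each letter $a$, $\pi_{a}$ is the unique order-preserving injective partial map on $[N]$ with domain the set of positions (from $0$) of $a$ in $f(w)$ and range the set of positions of $a$ in $w$; $\pi(w)=\bigcup_{a}\pi_{a}$. *)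

From mathcomp Require Import all_boot.
Set Implicit Arguments. Unset Strict Implicit. Unset Printing Implicit Defensive.

(* Words are sequences of naturals; the alphabet A = {0<1<...<k-1} is the set
   of naturals < k with the usual order. *)

Definition in_G (k : nat) (u : seq nat) : bool :=
  [&& size u == k, all (fun a => a < k) u
    & all (fun a => count_mem a u == 1) (iota 0 k)].

Definition in_Gamma (k n : nat) (v : seq nat) : Prop :=
  exists blocks : seq (seq nat),
    [/\ size blocks = k ^ n.-1, all (in_G k) blocks & v = flatten blocks].

(* f(w): the letters of w in nondecreasing order *)
Definition sortw (w : seq nat) : seq nat := sort leq w.

Definition positions (w : seq nat) (a : nat) : seq nat :=
  [seq i <- iota 0 (size w) | nth 0 w i == a].

(* pi_a : the order-preserving injective partial map on [N] with domain the
   positions of a in f(w) and range the positions of a in w (both are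
   increasing lists of the same length, so the map sends the r-th element of
   the domain to the r-th element of the range). *)
Definition std_piece (w : seq nat) (a : nat) (x : nat) : option nat :=
  if x \in positions (sortw w) a
  then Some (nth 0 (positions w a) (index x (positions (sortw w) a)))
  else None.

Definition std_perm (w : seq nat) (x y : nat) : Prop :=
  exists a, std_piece w a x = Some y.

Definition piece_ran (w : seq nat) (a y : nat) : Prop :=
  exists x, std_piece w a x = Some y.

(* first digit of the n-digit base-k representation of x (for x < k^n) *)
Definition first_digit (k n x : nat) : nat := x %/ k ^ n.-1.

From mathcomp Require Import all_boot.
From mathcomp Require Import zify.
Set Implicit Arguments. Unset Strict Implicit.

(* Write v = b_0 b_1 ... b_(M-1) with M = k^(n-1) blocks from G.  Every letter
   i < k occurs exactly M times in v, so f(v) is 0^M 1^M ... (k-1)^M: the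
   positions of i in f(v) are the x < kM with x %/ M = i, i.e. those whose
   first base-k digit is i.  The range of pi_i is the set of positions of i in
   v, and since b_j is a permutation of A it meets the block [jk, (j+1)k) in
   exactly one point, namely jk + index i b_j. *)

Lemma mem_positions w a y : (y \in positions w a) = (y < size w) && (nth 0 w y == a).
Proof. by rewrite mem_filter mem_iota add0n andbC. Qed.

Lemma size_positions w a : size (positions w a) = count_mem a w.
Proof.
rewrite size_filter -[in RHS](mkseq_nth 0 w) /mkseq count_map.
exact: eq_count.
Qed.

Lemma uniq_positions w a : uniq (positions w a).
Proof. exact/filter_uniq/iota_uniq. Qed.

Lemma std_piece_defined w a x : (std_piece w a x != None) = (x \in positions (sortw w) a).
Proof. by rewrite /std_piece; case: ifP. Qed.

(* pi_a maps the positions of a in f(w) onto those in w, which are equally many. *)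
Lemma piece_ranE w a y : piece_ran w a y <-> y \in positions w a.
Proof.
have size_sortw : size (positions (sortw w) a) = size (positions w a).
  by rewrite !size_positions; apply/permP/permEl/perm_sort.
split.
- case=> x; rewrite /std_piece; case: ifP => // x_dom [<-].
  by apply: mem_nth; rewrite -size_sortw index_mem.
- move=> yw; exists (nth 0 (positions (sortw w) a) (index y (positions w a))).
  have ltr : index y (positions w a) < size (positions (sortw w) a).
    by rewrite size_sortw index_mem.
  by rewrite /std_piece mem_nth // index_uniq ?uniq_positions // nth_index.
Qed.

Lemma piece_ran_nth w a y : piece_ran w a y <-> (y < size w) && (nth 0 w y == a).
Proof. by rewrite piece_ranE mem_positions. Qed.

Lemma piece_ran_disjoint w a b y : piece_ran w a y -> piece_ran w b y -> a = b.
Proof. by move=> /piece_ran_nth/andP[_ /eqP <-] /piece_ran_nth/andP[_ /eqP <-]. Qed.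

Lemma std_permE w x y : std_perm w x y <-> exists2 a, a \in w & std_piece w a x = Some y.
Proof.
split; last by case=> a _; exists a.
case=> a piece_a; exists a => //.
have /piece_ran_nth/andP[yw /eqP <-] : piece_ran w a y by exists x.
exact: mem_nth.
Qed.

Section PermutationWords.

Variables (k : nat) (b : seq nat).
Hypothesis bG : in_G k b.

Lemma size_G : size b = k.
Proof. by case/and3P: bG => /eqP. Qed.

Lemma count_mem_G a : count_mem a b = (a < k).
Proof.
case/and3P: bG => _ /allP lt_k /allP count1.
have [a_lt_k | a_ge_k] := ltnP a k; first by apply/eqP/count1; rewrite mem_iota.
by apply/count_memPn/negP => /lt_k; rewrite ltnNge a_ge_k.
Qed.

Lemma mem_G a : (a \in b) = (a < k).
Proof. by rewrite -has_pred1 has_count count_mem_G; case: (a < k). Qed.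

Lemma uniq_G : uniq b.
Proof.
have perm_iota : perm_eq b (iota 0 k).
  apply/allP => a _ /=.
  by rewrite count_mem_G count_uniq_mem ?iota_uniq // mem_iota.
by rewrite (perm_uniq perm_iota) iota_uniq.
Qed.

Lemma nth_G_eq i p : i < k -> p < k -> (nth 0 b p == i) = (p == index i b).
Proof.
move=> ik pk; apply/eqP/eqP => [<- | ->]; last by rewrite nth_index ?mem_G.
by rewrite index_uniq ?uniq_G ?size_G.
Qed.

Lemma index_G_lt i : i < k -> index i b < k.
Proof. by move=> ik; rewrite -size_G index_mem mem_G. Qed.

End PermutationWords.

Lemma count_divn_iota M k a : 0 < M ->
  count (fun x => x %/ M == a) (iota 0 (k * M)) = M * (a < k).
Proof.
move=> M_gt0; elim: k => [|k IHk]; first by rewrite muln0.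
rewrite mulSn addnC iotaD count_cat IHk add0n.
have last_block : {in iota (k * M) M, (fun x => x %/ M == a) =1 (fun=> a == k)}.
  move=> x; rewrite mem_iota => /andP[lo hi] /=.
  have -> : x = k * M + (x - k * M) by lia.
  by rewrite divnMDl // divn_small ?addn0 1?eq_sym //; lia.
rewrite (eq_in_count last_block).
case: (ltngtP a k) => [a_lt_k | a_gt_k | ->].
- by rewrite count_pred0 addn0 ltnS ltnW.
- by rewrite count_pred0 addn0 ltnS leqNgt a_gt_k.
- by rewrite count_predT size_iota ltnSn muln0 muln1.
Qed.

Section Concatenations.

Variables (k : nat) (bs : seq (seq nat)).
Hypothesis bsG : all (in_G k) bs.
Local Notation M := (size bs).
Local Notation v := (flatten bs).

Lemma size_flatten_G : size v = M * k.
Proof.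
elim: bs bsG => //= b bs' IHbs /andP[bG bsG'].
by rewrite size_cat IHbs // (size_G bG) mulSn.
Qed.

Lemma nth_flatten_G j p : j < M -> p < k ->
  nth 0 v (j * k + p) = nth 0 (nth [::] bs j) p.
Proof.
elim: bs bsG j => //= b bs' IHbs /andP[bG bsG'] [|j] j_lt p_lt.
  by rewrite nth_cat (size_G bG) mul0n add0n p_lt.
rewrite nth_cat (size_G bG) ifN; last by rewrite mulSn -ltnNge; lia.
have -> : j.+1 * k + p - k = j * k + p by rewrite mulSn; lia.
exact: IHbs.
Qed.

Lemma count_mem_flatten_G a : count_mem a v = M * (a < k).
Proof.
elim: bs bsG => //= b bs' IHbs /andP[bG bsG'].
by rewrite count_cat IHbs // (count_mem_G bG) mulSn.
Qed.

Lemma letter_flatten_G a : a \in v -> a < k.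
Proof. by case/flattenP=> b /(allP bsG) bG; rewrite (mem_G bG). Qed.

Lemma sortw_flatten_G : 0 < M -> sortw v = [seq x %/ M | x <- iota 0 (k * M)].
Proof.
move=> M_gt0; apply: (@sorted_eq _ leq leq_trans anti_leq).
- exact: sort_sorted leq_total _.
- by apply: homo_sorted (iota_sorted 0 _) => x y; apply: leq_div2r.
- apply: perm_trans (permEl (perm_sort _ _)) _.
  apply/allP => a _ /=.
  by rewrite count_mem_flatten_G count_map count_divn_iota.
Qed.

Lemma std_piece_flatten_G_defined i x : 0 < M ->
  (std_piece v i x != None) = (x < M * k) && (x %/ M == i).
Proof.
move=> M_gt0; rewrite std_piece_defined sortw_flatten_G // mem_positions.
rewrite size_map size_iota mulnC.
by case: ltnP => // x_lt; rewrite (nth_map 0) ?size_iota // nth_iota.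
Qed.

Lemma std_perm_flatten_G x y :
  std_perm v x y <-> exists2 i, i < k & std_piece v i x = Some y.
Proof.
by split=> [/std_permE[i /letter_flatten_G] | [i _]]; exists i.
Qed.

Lemma piece_ran_flatten_G_cover y :
  y < M * k <-> exists2 i, i < k & piece_ran v i y.
Proof.
split=> [y_lt | [i _ /piece_ran_nth/andP[]]]; last by rewrite size_flatten_G.
have y_lt' : y < size v by rewrite size_flatten_G.
exists (nth 0 v y); first exact/letter_flatten_G/mem_nth.
by apply/piece_ran_nth; rewrite y_lt' eqxx.
Qed.

Lemma piece_ran_flatten_G_block i j p : i < k -> j < M -> p < k ->
  piece_ran v i (j * k + p) <-> p = index i (nth [::] bs j).
Proof.
move=> ik jM pk; have bG : in_G k (nth [::] bs j) by apply/(allP bsG)/mem_nth.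
rewrite piece_ran_nth size_flatten_G nth_flatten_G // (nth_G_eq bG) //.
have -> : j * k + p < M * k by nia.
by split=> /eqP.
Qed.

Lemma piece_ran_flatten_G_transversal i j : i < k -> j < M ->
  exists! y, j * k <= y < j.+1 * k /\ piece_ran v i y.
Proof.
move=> ik jM; have bG : in_G k (nth [::] bs j) by apply/(allP bsG)/mem_nth.
have index_lt := index_G_lt bG ik.
exists (j * k + index i (nth [::] bs j)); split.
  by split; [rewrite mulSn; lia | apply/piece_ran_flatten_G_block].
move=> y [/andP[lo hi]]; rewrite mulSn in hi.
have -> : y = j * k + (y - j * k) by lia.
by move/piece_ran_flatten_G_block => -> //; lia.
Qed.

End Concatenations.

Theorem lemma3p6 (k n : nat) (v : seq nat) :
  2 <= k -> 1 <= n -> in_Gamma k n v ->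
  (* pi(v) is the union of pi_0, ..., pi_{k-1} *)
  (forall x y, std_perm v x y <-> exists2 i, i < k & std_piece v i x = Some y) /\
  (* domains *)
  (forall i, i < k -> forall x,
      std_piece v i x != None = (x < k ^ n) && (first_digit k n x == i)) /\
  (* the ranges partition [k^n] *)
  (forall y, y < k ^ n <-> exists2 i, i < k & piece_ran v i y) /\
  (forall i j y, i < k -> j < k -> piece_ran v i y -> piece_ran v j y -> i = j) /\
  (* each range is a transversal of the intervals [jk, (j+1)k - 1] *)
  (forall i, i < k -> forall j, j < k ^ n.-1 ->
      exists! y, j * k <= y < j.+1 * k /\ piece_ran v i y).
Proof.
move=> k_ge2 n_ge1 [bs [size_bs bsG ->]].
have M_gt0 : 0 < size bs by rewrite size_bs expn_gt0; lia.
have kn : k ^ n = size bs * k by rewrite size_bs -expnSr prednK.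
rewrite /first_digit kn -size_bs.
split; first exact: std_perm_flatten_G.
split; first by move=> i _ x; apply: std_piece_flatten_G_defined.
split; first exact: piece_ran_flatten_G_cover.
split; first by move=> i j y _ _; apply: piece_ran_disjoint.
by move=> i ik j jM; apply: piece_ran_flatten_G_transversal.
Qed.
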